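(* Let $\delta\in[\frac{\sqrt2}{2},1)$ and $p\in(0,1)$. Define $$h(p)=\begin{cases}1-0.5p, & p\in(0,p^{\star}],\\ 1-0.62p, & p\in(p^{\star},1),\end{cases}\qquad C(p)=\begin{cases}\left(\dfrac{\big((2-\delta)^{1-\frac{2}{p}}+2\delta\big)g(p)}{1-\delta}\right)^{p/2}, & p\in(0,p^{\star}],\\[2ex] \left(\dfrac{(2-\delta)^{1-\frac{2}{p}}g(p)+2^{2-\frac{2}{p}}\delta}{1-\delta}\right)^{p/2}, & p\in(p^{\star},1).\end{cases}$$ If $\delta\le h(p)$, then $C(p)<1$.
   Context: $g(p)=\frac{p}{2}(1-\frac{p}{2})^{\frac{2}{p}-1}$ for $p\in(0,1]$. $p^{\star}\approx0.45418$ is the unique solution in $(0,1]$ of $(\frac{p}{2})^{1/2}(2-p)^{\frac1p-\frac12}=1$. *)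

From Stdlib Require Import Reals.
Open Scope R_scope.

Definition g (p : R) : R := p / 2 * Rpower (1 - p / 2) (2 / p - 1).

Definition pstar_eq (p : R) : Prop :=
  Rpower (p / 2) (1 / 2) * Rpower (2 - p) (1 / p - 1 / 2) = 1.

Definition is_pstar (ps : R) : Prop :=
  0 < ps <= 1 /\ pstar_eq ps /\ (forall q, 0 < q <= 1 -> pstar_eq q -> q = ps).

Definition hfun (ps p : R) : R :=
  if Rle_dec p ps then 1 - 0.5 * p else 1 - 0.62 * p.

Definition Cfun (ps delta p : R) : R :=
  if Rle_dec p ps then
    Rpower ((Rpower (2 - delta) (1 - 2 / p) + 2 * delta) * g p / (1 - delta)) (p / 2)
  else
    Rpower ((Rpower (2 - delta) (1 - 2 / p) * g p + Rpower 2 (2 - 2 / p) * delta)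
             / (1 - delta)) (p / 2).

(* The threshold p* plays no role: each branch of C is below 1 whenever delta
   satisfies the corresponding bound of h.  With q = p/2, the estimates
   ln (1 - q) <= -q - q^2/2, ln (1 + q) >= q - q^2/2 and exp x >= 1 + x + x^2/2
   bound the real powers in C by reciprocals of polynomials in q, reducing each
   branch to a polynomial inequality.  The hypothesis delta >= sqrt 2 / 2 is
   needed only in the second branch, where with delta <= 1 - 0.62 p it forces
   p <= 1/2, the range in which 2^(2 - 2/p) <= p / (4 - 4 p). *)
From Stdlib Require Import Reals Lra Psatz.
From Coquelicot Require Import Coquelicot.
Open Scope R_scope.

Lemma le_of_derive_nonneg (f f' : R -> R) (a b : R) :
  a <= b ->
  (forall c, a <= c <= b -> is_derive f c (f' c)) ->
  (forall c, a < c < b -> 0 <= f' c) ->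
  f a <= f b.
Proof.
  intros Hab Hf Hf'.
  destruct Hab as [Hlt | <-]; [| lra].
  destruct (MVT_cor2 f f' a b) as [c [Hmvt Hc]]; [exact Hlt | |].
  - intros c Hc; apply is_derive_Reals, Hf, Hc.
  - specialize (Hf' c Hc); nra.
Qed.

Definition taylor2 (x : R) : R := 1 + x + x ^ 2 / 2.

Lemma taylor2_le_exp x : 0 <= x -> taylor2 x <= exp x.
Proof.
  intros Hx.
  enough (exp 0 - taylor2 0 <= exp x - taylor2 x)
    by (unfold taylor2 in *; rewrite exp_0 in *; lra).
  apply (le_of_derive_nonneg (fun t => exp t - taylor2 t) (fun t => exp t - 1 - t)); [lra | |].
  - intros c _; unfold taylor2; auto_derive; [easy | field].
  - intros c _; pose proof (exp_ineq1_le c); lra.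
Qed.

Lemma ln_1_sub_le q : 0 <= q < 1 -> ln (1 - q) <= - q - q ^ 2 / 2.
Proof.
  intros Hq.
  enough (- 0 - 0 ^ 2 / 2 - ln (1 - 0) <= - q - q ^ 2 / 2 - ln (1 - q))
    by (rewrite Rminus_0_r, ln_1 in *; nra).
  apply (le_of_derive_nonneg (fun t => - t - t ^ 2 / 2 - ln (1 - t)) (fun t => t ^ 2 / (1 - t))); [lra | |].
  - intros c Hc; auto_derive; [lra | field; lra].
  - intros c Hc; apply Rdiv_le_0_compat; nra.
Qed.

Lemma ln_1_add_ge q : 0 <= q -> q - q ^ 2 / 2 <= ln (1 + q).
Proof.
  intros Hq.
  enough (ln (1 + 0) - 0 + 0 ^ 2 / 2 <= ln (1 + q) - q + q ^ 2 / 2)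
    by (rewrite Rplus_0_r, ln_1 in *; nra).
  apply (le_of_derive_nonneg (fun t => ln (1 + t) - t + t ^ 2 / 2) (fun t => t ^ 2 / (1 + t))); [lra | |].
  - intros c Hc; auto_derive; [lra | field; lra].
  - intros c Hc; apply Rdiv_le_0_compat; nra.
Qed.

Lemma exp_opp_le_inv_taylor2 c t : 0 <= c <= t -> exp (- t) <= / taylor2 c.
Proof.
  intros Hct.
  assert (Htc : 0 < taylor2 c) by (unfold taylor2; nra).
  rewrite exp_Ropp; apply Rinv_le_contravar; [exact Htc |].
  apply (Rle_trans _ (exp c)); [now apply taylor2_le_exp |].
  destruct (proj2 Hct) as [Hlt | <-]; [left; now apply exp_increasing | lra].
Qed.

Lemma le_Rinv c q : 0 < q -> c * q <= 1 -> c <= / q.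
Proof.
  intros Hq Hcq; apply (Rmult_le_reg_r q); [exact Hq |].
  rewrite Rinv_l by lra; exact Hcq.
Qed.

Lemma Rpower_1_sub_le q :
  0 < q < 1 -> Rpower (1 - q) (/ q - 1) <= / taylor2 ((1 - q) * (1 + q / 2)).
Proof.
  intros Hq; unfold Rpower.
  replace ((/ q - 1) * ln (1 - q)) with (- ((/ q - 1) * - ln (1 - q))) by ring.
  apply exp_opp_le_inv_taylor2.
  assert (Hexp : 1 <= / q) by (apply le_Rinv; lra).
  replace ((1 - q) * (1 + q / 2)) with ((/ q - 1) * (q + q ^ 2 / 2)) by (field; lra).
  pose proof (ln_1_sub_le q ltac:(lra)).
  split; [apply Rmult_le_pos; nra | apply Rmult_le_compat_l; lra].
Qed.

Lemma Rpower_le_inv_taylor2 q x :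
  0 < q < 1 -> 1 + q <= x -> Rpower x (1 - / q) <= / taylor2 ((1 - q) * (1 - q / 2)).
Proof.
  intros Hq Hx; unfold Rpower.
  replace ((1 - / q) * ln x) with (- ((/ q - 1) * ln x)) by ring.
  apply exp_opp_le_inv_taylor2.
  assert (Hexp : 1 <= / q) by (apply le_Rinv; lra).
  assert (Hln : q - q ^ 2 / 2 <= ln x).
  { apply (Rle_trans _ (ln (1 + q))); [apply ln_1_add_ge; lra |].
    destruct Hx as [Hlt | <-]; [left; apply ln_increasing; lra | lra]. }
  replace ((1 - q) * (1 - q / 2)) with ((/ q - 1) * (q - q ^ 2 / 2)) by (field; lra).
  split; [apply Rmult_le_pos; nra | apply Rmult_le_compat_l; lra].
Qed.

(* 2^(1/q - 2) = 4 * 2^(1/q - 4) >= 4 (1 + (1/q - 4) ln 2) >= 2/q - 4, as ln 2 > 1/2. *)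
Lemma Rpower_2_le q : 0 < q <= 1 / 4 -> Rpower 2 (2 - / q) <= q / (2 - 4 * q).
Proof.
  intros Hq; unfold Rpower.
  assert (Hq4 : 4 <= / q) by (apply le_Rinv; lra).
  replace ((2 - / q) * ln 2) with (- (ln 2 + ln 2 + (/ q - 4) * ln 2)) by ring.
  rewrite exp_Ropp, !exp_plus, exp_ln by lra.
  replace (q / (2 - 4 * q)) with (/ (2 * / q - 4)) by (field; lra).
  apply Rinv_le_contravar; [lra |].
  pose proof (exp_ineq1_le ((/ q - 4) * ln 2)).
  pose proof ln_lt_2.
  nra.
Qed.

Lemma taylor2_gap q :
  0 < q < 1 / 2 ->
  / taylor2 ((1 - q) * (1 - q / 2)) + (2 - 2 * q) < taylor2 ((1 - q) * (1 + q / 2)).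
Proof.
  intros Hq.
  set (ta := taylor2 ((1 - q) * (1 + q / 2))).
  set (tb := taylor2 ((1 - q) * (1 - q / 2))).
  assert (Htb : 0 < tb) by (unfold tb, taylor2; nra).
  assert (Hpoly : ta * tb - 1 - (2 - 2 * q) * tb =
    1/4 + q - 33/8*q^2 + 5*q^3 - 191/64*q^4 + 15/16*q^5 - 1/32*q^6 - 1/16*q^7 + 1/64*q^8)
    by (unfold ta, tb, taylor2; field).
  assert (Hpos : 0 < ta * tb - 1 - (2 - 2 * q) * tb).
  { rewrite Hpoly.
    assert (0 < q ^ 2) by nra. assert (q ^ 3 <= q ^ 2 / 2) by nra. assert (0 < q ^ 3) by nra.
    assert (q ^ 4 <= q ^ 3 / 2) by nra. assert (0 < q ^ 4) by nra.
    assert (q ^ 5 <= q ^ 4 / 2) by nra. assert (0 < q ^ 5) by nra.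
    assert (q ^ 6 <= q ^ 5 / 2) by nra. assert (0 < q ^ 6) by nra.
    assert (q ^ 7 <= q ^ 6 / 2) by nra. assert (0 < q ^ 7) by nra.
    assert (0 < q ^ 8) by nra.
    nra. }
  apply (Rmult_lt_reg_r tb); [exact Htb |].
  rewrite Rmult_plus_distr_r, Rinv_l by lra.
  lra.
Qed.

Lemma Rpower_pos x y : 0 < Rpower x y.
Proof. apply exp_pos. Qed.

Lemma g_pos p : 0 < p -> 0 < g p.
Proof. intros Hp; apply Rmult_lt_0_compat; [lra | apply Rpower_pos]. Qed.

Lemma first_branch_numerator_lt delta p :
  0 <= delta -> 0 < p < 1 -> delta <= 1 - 0.5 * p ->
  (Rpower (2 - delta) (1 - 2 / p) + 2 * delta) * g p < 1 - delta.
Proof.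
  intros Hd Hp Hh.
  set (q := p / 2).
  assert (Hq : 0 < q < 1 / 2) by (unfold q; lra).
  assert (Hinv : 2 / p = / q) by (unfold q; field; lra).
  set (ta := taylor2 ((1 - q) * (1 + q / 2))).
  assert (Hta : 0 < ta) by (unfold ta, taylor2; nra).
  assert (Hg : g p <= q * / ta).
  { unfold g; fold q; rewrite Hinv.
    apply Rmult_le_compat_l; [lra | apply Rpower_1_sub_le; lra]. }
  assert (HX : Rpower (2 - delta) (1 - 2 / p) + 2 * delta
               <= / taylor2 ((1 - q) * (1 - q / 2)) + (2 - 2 * q)).
  { rewrite Hinv; pose proof (Rpower_le_inv_taylor2 q (2 - delta)).
    unfold q in *; lra. }
  pose proof (taylor2_gap q Hq) as Hgap; fold ta in Hgap.
  pose proof (Rpower_pos (2 - delta) (1 - 2 / p)).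
  pose proof (g_pos p ltac:(lra)).
  apply (Rlt_le_trans _ (ta * (q * / ta))).
  - apply (Rle_lt_trans _ ((/ taylor2 ((1 - q) * (1 - q / 2)) + (2 - 2 * q)) * (q * / ta))).
    + apply Rmult_le_compat; lra.
    + apply Rmult_lt_compat_r; [| exact Hgap].
      apply Rmult_lt_0_compat; [lra | now apply Rinv_0_lt_compat].
  - replace (ta * (q * / ta)) with q by (field; lra).
    unfold q; lra.
Qed.

Lemma second_branch_numerator_lt delta p :
  0 <= delta -> 0 < p <= 1 / 2 -> delta <= 1 - 0.62 * p ->
  Rpower (2 - delta) (1 - 2 / p) * g p + Rpower 2 (2 - 2 / p) * delta < 1 - delta.
Proof.
  intros Hd Hp Hh.
  set (q := p / 2).
  assert (Hq : 0 < q <= 1 / 4) by (unfold q; lra).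
  assert (Hinv : 2 / p = / q) by (unfold q; field; lra).
  assert (Hq4 : 4 <= / q) by (apply le_Rinv; lra).
  assert (HX : Rpower (2 - delta) (1 - 2 / p) <= 1).
  { rewrite <- (Rpower_O (2 - delta)) at 2 by lra.
    apply Rle_Rpower; [lra |]. rewrite Hinv; lra. }
  assert (Hg : g p <= q / 2.19).
  { set (a := (1 - q) * (1 + q / 2)).
    assert (Ha : 0.84 <= a) by (unfold a; nra).
    assert (Hta : 2.19 <= taylor2 a) by (unfold taylor2; nra).
    apply (Rle_trans _ (q * / taylor2 a)).
    - unfold g; fold q; rewrite Hinv.
      apply Rmult_le_compat_l; [lra | apply Rpower_1_sub_le; lra].
    - apply Rmult_le_compat_l; [lra | apply Rinv_le_contravar; lra]. }
  assert (HY : Rpower 2 (2 - 2 / p) <= q / (2 - 4 * q))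
    by (rewrite Hinv; now apply Rpower_2_le).
  pose proof (Rpower_pos (2 - delta) (1 - 2 / p)).
  pose proof (g_pos p ltac:(lra)).
  assert (Hr : q / (2 - 4 * q) * (2 - 4 * q) = q) by (field; lra).
  assert (Rpower (2 - delta) (1 - 2 / p) * g p <= q / 2.19) by nra.
  assert (Rpower 2 (2 - 2 / p) * delta <= q / (2 - 4 * q) * delta)
    by (apply Rmult_le_compat_r; lra).
  assert (q / (2 - 4 * q) * delta < 1 - delta - q / 2.19).
  { apply (Rmult_lt_reg_r (2 - 4 * q)); [lra |].
    unfold q in *; nra. }
  lra.
Qed.

Lemma Rpower_div_lt_1 x y e : 0 < x < y -> 0 < e -> Rpower (x / y) e < 1.
Proof.
  intros Hxy He.
  assert (Hln : ln (x / y) < 0).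
  { rewrite <- ln_1; apply ln_increasing.
    - apply Rdiv_lt_0_compat; lra.
    - rewrite <- Rdiv_lt_1; lra. }
  unfold Rpower; rewrite <- exp_0; apply exp_increasing; nra.
Qed.

Lemma sqrt2_div_2_gt : 0.7 < sqrt 2 / 2.
Proof.
  enough (1.4 < sqrt 2) by lra.
  rewrite <- (sqrt_square 1.4) by lra.
  apply sqrt_lt_1_alt; lra.
Qed.

Theorem lemma1 (ps delta p : R) :
  is_pstar ps ->
  sqrt 2 / 2 <= delta < 1 ->
  0 < p < 1 ->
  delta <= hfun ps p ->
  Cfun ps delta p < 1.
Proof.
  intros _ Hd Hp Hh.
  pose proof sqrt2_div_2_gt.
  pose proof (g_pos p ltac:(lra)).
  pose proof (Rpower_pos (2 - delta) (1 - 2 / p)).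
  pose proof (Rpower_pos 2 (2 - 2 / p)).
  unfold Cfun, hfun in *.
  destruct (Rle_dec p ps); apply Rpower_div_lt_1; try lra; split.
  - apply Rmult_lt_0_compat; lra.
  - apply first_branch_numerator_lt; lra.
  - apply Rplus_lt_0_compat; apply Rmult_lt_0_compat; lra.
  - apply second_branch_numerator_lt; lra.
Qed.
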